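(* Let $P,R\in\mathrm{Sym}(n,\mathbb{R})$, $Q\in\mathrm{Mat}(n,\mathbb{R})$ and constants $C_1,C_2,C_3>0$ with $\langle Pv,v\rangle\ge C_1|v|^2$, $|Pv|\ge C_1|v|$, $|Qv|\le C_2|v|$, $|Rv|\le C_3|v|$ for all $v\in\mathbb{R}^n$. For $\lambda\in\mathbb{R}$ let $B_\lambda=\begin{bmatrix}P^{-1}&-P^{-1}Q\\-Q^TP^{-1}&Q^TP^{-1}Q-R-\lambda I_n\end{bmatrix}$ and $J=\begin{bmatrix}0&-I_n\\ I_n&0\end{bmatrix}$. Then $JB_\lambda$ is hyperbolic for every $\lambda>C_2^2/C_1+C_3$.
   Context: A real matrix is hyperbolic if it has no eigenvalue on the imaginary axis. *)

From mathcomp Require Import all_boot all_order all_algebra.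
From mathcomp Require Import reals.
From mathcomp Require Import complex.
Set Implicit Arguments. Unset Strict Implicit. Unset Printing Implicit Defensive.
Import Order.TTheory GRing.Theory Num.Theory.
Local Open Scope ring_scope.

Definition vnorm (R : realType) (n : nat) (v : 'cV[R]_n) : R :=
  Num.sqrt (\sum_(i < n) v i 0 ^+ 2).

Definition vdot (R : realType) (n : nat) (u v : 'cV[R]_n) : R :=
  \sum_(i < n) u i 0 * v i 0.

Definition complexify (R : realType) (m : nat) (A : 'M[R]_m) : 'M[R[i]]_m :=
  map_mx (fun x => (x%:C)%C) A.

Definition hyperbolic (R : realType) (m : nat) (A : 'M[R]_m) : Prop :=
  forall z : R[i], eigenvalue (complexify A) z -> complex.Re z != 0.

Arguments complexify {R m}.
Definition Jmx (R : realType) (n : nat) : 'M[R]_(n + n) :=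
  block_mx 0 (- 1%:M) 1%:M 0.

Definition Bmx (R : realType) (n : nat) (P Q Rm : 'M[R]_n) (lam : R)
  : 'M[R]_(n + n) :=
  block_mx (invmx P) (- (invmx P *m Q))
           (- (Q^T *m invmx P)) (Q^T *m invmx P *m Q - Rm - lam%:M).
Arguments Jmx {R} n.

From mathcomp Require Import all_boot all_order all_algebra.
From mathcomp Require Import reals complex.
From mathcomp Require Import ring lra.
Import Order.TTheory GRing.Theory Num.Theory.
Local Open Scope ring_scope.

(* If J B_lam had an eigenvalue i mu, split a left eigenvector into blocks and
   eliminate its second block with P^-1: the first block y <> 0 then satisfies
   y (R + lam + mu^2 P) = i mu y (Q - Q^T).  Pairing with the conjugate of y,
   the left side is at least (lam - C3 + C1 mu^2) |y|^2 and the right side at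
   most 2 C2 |mu| |y|^2.  The trinomial C1 m^2 - 2 C2 m + lam - C3 has negative
   discriminant exactly when lam > C2^2 / C1 + C3, so y = 0, and then the whole
   eigenvector vanishes. *)

Section ComplexifiedEigenvalues.
Context {R : realType}.

Lemma Re_mulmx_complexify p q r (X : 'M[R[i]]_(p, q)) (A : 'M[R]_(q, r)) :
  map_mx (@complex.Re R) (X *m map_mx (real_complex R) A) = map_mx (@complex.Re R) X *m A.
Proof.
apply/matrixP => i j; rewrite !mxE raddf_sum; apply: eq_bigr => k _.
by rewrite !mxE; case: (X i k) => a b /=; rewrite mulr0 subr0.
Qed.

Lemma Im_mulmx_complexify p q r (X : 'M[R[i]]_(p, q)) (A : 'M[R]_(q, r)) :
  map_mx (@complex.Im R) (X *m map_mx (real_complex R) A) = map_mx (@complex.Im R) X *m A.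
Proof.
apply/matrixP => i j; rewrite !mxE raddf_sum; apply: eq_bigr => k _.
by rewrite !mxE; case: (X i k) => a b /=; rewrite mulr0 add0r.
Qed.

Lemma eigenvalue_complexify m (A : 'M[R]_m) (x y : R) :
  eigenvalue (complexify A) (Complex x y) ->
  exists a b : 'rV[R]_m,
    [/\ a *m A = x *: a - y *: b, b *m A = y *: a + x *: b & (a != 0) || (b != 0)].
Proof.
move=> /eigenvalueP[v vA v_neq0].
exists (map_mx (@complex.Re R) v), (map_mx (@complex.Im R) v); split.
- rewrite -Re_mulmx_complexify vA; apply/matrixP => i j.
  by rewrite !mxE; case: (v i j).
- rewrite -Im_mulmx_complexify vA; apply/matrixP => i j.
  by rewrite !mxE; case: (v i j) => a b /=; rewrite addrC.
- apply: contraNT v_neq0; rewrite negb_or !negbK => /andP[/eqP Re0 /eqP Im0].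
  apply/eqP/matrixP => i j; move/matrixP/(_ i j): Re0; move/matrixP/(_ i j): Im0.
  by rewrite !mxE; case: (v i j) => a b /= -> ->.
Qed.

End ComplexifiedEigenvalues.

Section EuclideanNorm.
Context {R : realType} {n : nat}.
Implicit Types (u v : 'cV[R]_n) (K : 'M[R]_n).

Lemma vnorm_sqr v : vnorm v ^+ 2 = vdot v v.
Proof. by rewrite sqr_sqrtr //; apply: sumr_ge0 => i _; rewrite sqr_ge0. Qed.

Lemma vnorm_sqr_eq0 v : vnorm v ^+ 2 = 0 -> v = 0.
Proof.
rewrite vnorm_sqr /vdot => /psumr_eq0P vv0; apply/matrixP => i j.
have /eqP : v i 0 * v i 0 = 0 by apply: vv0 => // k _; rewrite -expr2 sqr_ge0.
by rewrite ord1 mxE mulf_eq0 orbb => /eqP.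
Qed.

Lemma vdot0l v : vdot 0 v = 0.
Proof. by rewrite /vdot big1 // => i _; rewrite mxE mul0r. Qed.

Lemma vdot_young u v (t : R) : 0 < t ->
  2 * `|vdot u v| <= t * vdot u u + t^-1 * vdot v v.
Proof.
move=> t_gt0.
have expand (s : R) : \sum_(i < n) (t * u i 0 + s * v i 0) ^+ 2 =
    t ^+ 2 * vdot u u + 2 * s * t * vdot u v + s ^+ 2 * vdot v v.
  rewrite /vdot !mulr_sumr -!big_split /=.
  by apply: eq_bigr => i _; ring.
have sum_ge0 (s : R) : 0 <= \sum_(i < n) (t * u i 0 + s * v i 0) ^+ 2.
  by apply: sumr_ge0 => i _; rewrite sqr_ge0.
have := sum_ge0 1; have := sum_ge0 (-1); rewrite !expand => hm hp.
rewrite -(ler_pM2l t_gt0) mulrDr mulVKf ?gt_eqF //.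
have [uv_ge0|uv_lt0] := lerP 0 (vdot u v).
  by rewrite ger0_norm //; lra.
by rewrite ltr0_norm //; lra.
Qed.

Lemma vdot_bounded K (C : R) u v : 0 < C ->
  (forall w, vnorm (K *m w) <= C * vnorm w) ->
  2 * `|vdot (K *m u) v| <= C * (vnorm u ^+ 2 + vnorm v ^+ 2).
Proof.
move=> C_gt0 K_bounded.
have Ku : vnorm (K *m u) ^+ 2 <= C ^+ 2 * vnorm u ^+ 2.
  rewrite -exprMn ler_pXn2r // ?nnegrE ?mulr_ge0 ?sqrtr_ge0 ?ltW //.
have C'_gt0 : 0 < C^-1 by rewrite invr_gt0.
apply: le_trans (vdot_young (K *m u) v C^-1 C'_gt0) _.
rewrite invrK -!vnorm_sqr mulrDr lerD2r.
by rewrite -(ler_pM2l C_gt0) mulrA mulfV ?gt_eqF // mul1r mulrA -expr2.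
Qed.

End EuclideanNorm.

Lemma coercive_unitmx {R : realType} {n} {P : 'M[R]_n} {C : R} : 0 < C ->
  (forall v, C * vnorm v ^+ 2 <= vdot (P *m v) v) -> P \in unitmx.
Proof.
move=> C_gt0 P_coercive; rewrite unitmxE unitfE -det_tr.
apply/negP => /det0P[u u_neq0 uPt0].
have Pu0 : P *m u^T = 0 by rewrite -[P]trmxK -trmx_mul uPt0 trmx0.
have := P_coercive u^T; rewrite Pu0 vdot0l pmulr_rle0 // => u_le0.
have /vnorm_sqr_eq0/eqP : vnorm u^T ^+ 2 = 0 by apply/eqP; rewrite eq_le u_le0 sqr_ge0.
by rewrite trmx_eq0 (negPf u_neq0).
Qed.

Section RowForms.
Context {R : realType} {n : nat}.
Implicit Types (u w : 'rV[R]_n) (K M N : 'M[R]_n).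

(* [eigenvalue] works with row vectors, so bilinear forms are taken on rows. *)
Definition mxform u M w : R := (u *m M *m w^T) 0 0.

Lemma mxformE u M w : mxform u M w = vdot (M *m w^T) u^T.
Proof. by rewrite /mxform -mulmxA mxE; apply: eq_bigr => i _; rewrite !mxE mulrC. Qed.

Lemma mxformD u M N w : mxform u (M + N) w = mxform u M w + mxform u N w.
Proof. by rewrite /mxform mulmxDr mulmxDl mxE. Qed.

Lemma mxformN u M w : mxform u (- M) w = - mxform u M w.
Proof. by rewrite /mxform mulmxN mulNmx mxE. Qed.

Lemma mxformZ u (c : R) M w : mxform u (c *: M) w = c * mxform u M w.
Proof. by rewrite /mxform -scalemxAr -scalemxAl mxE. Qed.

Lemma mxform_tr u M w : mxform u M^T w = mxform w M u.
Proof.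
rewrite /mxform; have -> : w *m M *m u^T = (u *m M^T *m w^T)^T.
  by rewrite !trmx_mul !trmxK mulmxA.
by rewrite [RHS]mxE.
Qed.

Lemma mxform1 u : mxform u 1%:M u = vnorm u^T ^+ 2.
Proof. by rewrite vnorm_sqr mxformE mul1mx. Qed.

Lemma mxform_bounded {K} {C : R} u w : 0 < C ->
  (forall v, vnorm (K *m v) <= C * vnorm v) ->
  `|mxform u K w| <= C * (vnorm u^T ^+ 2 + vnorm w^T ^+ 2) / 2.
Proof.
move=> C_gt0 /(vdot_bounded K C w^T u^T C_gt0).
by rewrite -mxformE addrC; lra.
Qed.

Lemma pencil_energy {P Q Rm : 'M[R]_n} {lam mu : R} {a b} :
  a *m (Rm + lam%:M + mu ^+ 2 *: P) = mu *: (b *m (Q^T - Q)) ->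
  b *m (Rm + lam%:M + mu ^+ 2 *: P) = mu *: (a *m (Q - Q^T)) ->
  mxform a Rm a + mxform b Rm b + lam * (vnorm a^T ^+ 2 + vnorm b^T ^+ 2)
    + mu ^+ 2 * (mxform a P a + mxform b P b)
  = 2 * mu * (mxform a Q b - mxform b Q a).
Proof.
move=> Ea Eb.
have Fa : mxform a (Rm + lam%:M + mu ^+ 2 *: P) a = mu * mxform b (Q^T - Q) a.
  by rewrite /mxform Ea -scalemxAl mxE.
have Fb : mxform b (Rm + lam%:M + mu ^+ 2 *: P) b = mu * mxform a (Q - Q^T) b.
  by rewrite /mxform Eb -scalemxAl mxE.
move: Fa Fb; rewrite -[lam%:M]scalemx1 !(mxformD, mxformN, mxformZ, mxform_tr) !mxform1.
lra.
Qed.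

End RowForms.

Section HamiltonianEigenvectors.
Context {R : realType} {n : nat} {P Q Rm : 'M[R]_n} {lam : R}.
Hypothesis P_unit : P \in unitmx.

Lemma JB_block : Jmx n *m Bmx P Q Rm lam =
  block_mx (Q^T *m invmx P) (Rm + lam%:M - Q^T *m invmx P *m Q)
           (invmx P) (- (invmx P *m Q)).
Proof.
rewrite /Jmx /Bmx mulmx_block !mul0mx !mulNmx !mul1mx !add0r !addr0 opprK.
by rewrite !opprB addrA [lam%:M + _]addrC.
Qed.

Lemma mulmx_row_JB (x y p q : 'rV[R]_n) :
  row_mx x y *m (Jmx n *m Bmx P Q Rm lam) = row_mx p q ->
  y = p *m P - x *m Q^T /\ q = x *m (Rm + lam%:M) - p *m Q.
Proof.
rewrite JB_block mul_row_block => /eq_row_mx[Ep Eq].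
have {}Ep : (x *m Q^T + y) *m invmx P = p by rewrite mulmxDl -mulmxA.
split; first by rewrite -Ep mulmxKV // [_ + y]addrC addrK.
by rewrite -Eq -Ep mulmxBr mulmxN !mulmxA !mulmxDl opprD addrA.
Qed.

(* With y := a1 + i b1, the last two equations read
   y (Rm + lam + mu^2 P) = i mu y (Q - Q^T). *)
Lemma JB_eigen_pencil {mu : R} {a1 a2 b1 b2 : 'rV[R]_n} :
  row_mx a1 a2 *m (Jmx n *m Bmx P Q Rm lam) = - mu *: row_mx b1 b2 ->
  row_mx b1 b2 *m (Jmx n *m Bmx P Q Rm lam) = mu *: row_mx a1 a2 ->
  [/\ a2 = - mu *: (b1 *m P) - a1 *m Q^T, b2 = mu *: (a1 *m P) - b1 *m Q^T,
      a1 *m (Rm + lam%:M + mu ^+ 2 *: P) = mu *: (b1 *m (Q^T - Q)) &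
      b1 *m (Rm + lam%:M + mu ^+ 2 *: P) = mu *: (a1 *m (Q - Q^T))].
Proof.
rewrite !scale_row_mx => /mulmx_row_JB[Ea2 Eb2'] /mulmx_row_JB[Eb2 Ea2'].
rewrite -!scalemxAl in Ea2 Eb2 Ea2' Eb2'.
have Ra : a1 *m (Rm + lam%:M) = - mu *: b2 + - mu *: (b1 *m Q) by rewrite Eb2' subrK.
have Rb : b1 *m (Rm + lam%:M) = mu *: a2 + mu *: (a1 *m Q) by rewrite Ea2' subrK.
split=> //; rewrite mulmxDr -scalemxAr ?Ra ?Rb ?Ea2 ?Eb2 mulmxBr;
  by apply/rowP => j; rewrite !mxE; ring.
Qed.

End HamiltonianEigenvectors.

Lemma trinomial_gt0 (R : realFieldType) (a b c m : R) :
  0 < a -> b ^+ 2 / a < c -> 0 < c + a * m ^+ 2 - 2 * b * m.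
Proof.
move=> a_gt0; rewrite ltr_pdivrMr // => b2_lt.
rewrite -(pmulr_rgt0 _ a_gt0); have := sqr_ge0 (a * m - b); lra.
Qed.

Section PencilKernel.
Context {R : realType} {n : nat} {P Q Rm : 'M[R]_n} {C1 C2 C3 lam : R}.
Hypotheses (C1_gt0 : 0 < C1) (C2_gt0 : 0 < C2) (C3_gt0 : 0 < C3).
Hypothesis P_coercive : forall v, C1 * vnorm v ^+ 2 <= vdot (P *m v) v.
Hypothesis Q_bounded : forall v, vnorm (Q *m v) <= C2 * vnorm v.
Hypothesis Rm_bounded : forall v, vnorm (Rm *m v) <= C3 * vnorm v.
Hypothesis lam_large : C2 ^+ 2 / C1 + C3 < lam.

Lemma pencil_kernel_trivial {mu : R} {a b : 'rV[R]_n} :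
  a *m (Rm + lam%:M + mu ^+ 2 *: P) = mu *: (b *m (Q^T - Q)) ->
  b *m (Rm + lam%:M + mu ^+ 2 *: P) = mu *: (a *m (Q - Q^T)) ->
  a = 0 /\ b = 0.
Proof.
move=> Ea Eb; have := pencil_energy Ea Eb.
rewrite -[mu ^+ 2]real_normK ?num_real //.
have Pa : C1 * vnorm a^T ^+ 2 <= mxform a P a by rewrite mxformE.
have Pb : C1 * vnorm b^T ^+ 2 <= mxform b P b by rewrite mxformE.
have Ra := mxform_bounded a a C3_gt0 Rm_bounded.
have Rb := mxform_bounded b b C3_gt0 Rm_bounded.
have Qab := mxform_bounded a b C2_gt0 Q_bounded.
have Qba := mxform_bounded b a C2_gt0 Q_bounded.
move: Pa Pb Ra Rb Qab Qba.
set pa := mxform a P a; set pb := mxform b P b.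
set ra := mxform a Rm a; set rb := mxform b Rm b.
set x := mxform a Q b; set y := mxform b Q a.
set sa := vnorm a^T ^+ 2; set sb := vnorm b^T ^+ 2.
move=> Pa Pb Ra Rb Qab Qba energy.
have coef_gt0 : 0 < (lam - C3) + C1 * `|mu| ^+ 2 - 2 * C2 * `|mu|.
  by apply: trinomial_gt0 => //; rewrite ltrBrDr.
have hP : `|mu| ^+ 2 * (C1 * (sa + sb)) <= `|mu| ^+ 2 * (pa + pb).
  by rewrite ler_wpM2l ?sqr_ge0 //; lra.
have hQ : mu * (x - y) <= `|mu| * (C2 * (sa + sb)).
  apply: le_trans (ler_norm _) _; rewrite normrM ler_wpM2l //.
  apply: le_trans (ler_normB _ _) _; lra.
have hR : - (C3 * (sa + sb)) <= ra + rb.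
  have := ler_norm (- ra); have := ler_norm (- rb); rewrite !normrN; lra.
have : ((lam - C3) + C1 * `|mu| ^+ 2 - 2 * C2 * `|mu|) * (sa + sb) <= 0 by lra.
rewrite pmulr_rle0 // => S_le0.
have sa_ge0 : 0 <= sa := sqr_ge0 _.
have sb_ge0 : 0 <= sb := sqr_ge0 _.
have sa0 : sa = 0 by lra.
have sb0 : sb = 0 by lra.
by split; apply: trmx_inj; rewrite trmx0; apply: vnorm_sqr_eq0.
Qed.

End PencilKernel.

Theorem corollary2p4 (R : realType) (n : nat) (P Q Rm : 'M[R]_n)
  (C1 C2 C3 : R) :
  P^T = P -> Rm^T = Rm ->
  0 < C1 -> 0 < C2 -> 0 < C3 ->
  (forall v : 'cV[R]_n, vdot (P *m v) v >= C1 * vnorm v ^+ 2) ->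
  (forall v : 'cV[R]_n, vnorm (P *m v) >= C1 * vnorm v) ->
  (forall v : 'cV[R]_n, vnorm (Q *m v) <= C2 * vnorm v) ->
  (forall v : 'cV[R]_n, vnorm (Rm *m v) <= C3 * vnorm v) ->
  forall lam : R, lam > C2 ^+ 2 / C1 + C3 ->
  hyperbolic (Jmx n *m Bmx P Q Rm lam).
Proof.
move=> _ _ C1_gt0 C2_gt0 C3_gt0 P_coercive _ Q_bounded Rm_bounded lam lam_large.
move=> [x mu] /eigenvalue_complexify[a [b [Ea Eb ab_neq0]]]; apply/eqP => /= x0.
rewrite {x}x0 !scale0r sub0r addr0 -scaleNr in Ea Eb.
have P_unit := coercive_unitmx C1_gt0 P_coercive.
rewrite -[a]hsubmxK -[b]hsubmxK in Ea Eb ab_neq0.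
have [a2E b2E Ea1 Eb1] := JB_eigen_pencil P_unit Ea Eb.
have [a1_0 b1_0] := pencil_kernel_trivial C1_gt0 C2_gt0 C3_gt0
  P_coercive Q_bounded Rm_bounded lam_large Ea1 Eb1.
move: ab_neq0; rewrite a2E b2E a1_0 b1_0.
by rewrite !(mul0mx, scaler0, subr0, oppr0, row_mx0) eqxx.
Qed.
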